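(* Let $a, b, n$ be positive integers with $b>1$, $n>1$ and $\gcd(r_b(n),a)=1$, and let $\Bbbk$ be a field. Let $\mathcal{L} \subseteq \mathbb{Z}^n$ be the subgroup generated by the $n-1$ vectors $b\,e_k - (b+1)\,e_{k+1} + e_{k+2}$ for $k = 1, \ldots, n-2$, together with $(a+1)\,e_1 + b\, e_{n-1} - (b+1)\, e_n$ (here $e_1,\dots,e_n$ is the standard basis of $\mathbb{Z}^n$). Then the kernel of the $\Bbbk$-algebra homomorphism $\Bbbk[x_1,\ldots,x_n] \to \Bbbk[t]$, $x_i \mapsto t^{a_i}$, is equal to the ideal generated by $\{x_1^{u_1}\cdots x_n^{u_n} - x_1^{v_1}\cdots x_n^{v_n} \mid u, v \in \mathbb{N}^n,\ u - v \in \mathcal{L}\}$.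
   Context: For an integer $\ell \ge 1$, $r_b(\ell) = \sum_{j=0}^{\ell-1} b^j$, and $r_b(0)=0$. For $i \ge 1$, $a_i := r_b(n) + a\, r_b(i-1)$; $S_a(b,n)$ is the numerical semigroup generated by $a_1,\ldots,a_n$. *)

From mathcomp Require Import all_boot all_algebra.
From mathcomp Require Import mpoly.
Set Implicit Arguments. Unset Strict Implicit. Unset Printing Implicit Defensive.
Import GRing.Theory.
Local Open Scope ring_scope.

Definition rb (b l : nat) : nat := (\sum_(j < l) b ^ j)%N.

(* exponent a_i for the 0-based index i : 'I_n, i.e. paper's a_{i+1}
   = r_b(n) + a * r_b(i) *)
Definition aexp (a b n : nat) (i : 'I_n) : nat := (rb b n + a * rb b i)%N.

Definition ind (j k : nat) : int := if j == k then 1 else 0.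

(* Paper's generator b e_k - (b+1) e_{k+1} + e_{k+2}, coordinate j (1-based). *)
Definition genL (b k j : nat) : int :=
  (b%:Z) * ind j k - (b.+1)%:Z * ind j k.+1 + ind j k.+2.

(* Paper's last generator (a+1) e_1 + b e_{n-1} - (b+1) e_n, coordinate j (1-based). *)
Definition genLast (a b n j : nat) : int :=
  (a.+1)%:Z * ind j 1 + b%:Z * ind j n.-1 - (b.+1)%:Z * ind j n.

(* w lies in the subgroup L of Z^n generated by the n-1 vectors above
   (coordinate i : 'I_n corresponds to paper's index i+1). *)
Definition inL (a b n : nat) (w : 'I_n -> int) : Prop :=
  exists c : nat -> int, forall i : 'I_n,
    w i = \sum_(1 <= k < n.-1) c k * genL b k i.+1 + c n.-1 * genLast a b n i.+1.

Definition in_ideal_gen (R : comNzRingType) (S : R -> Prop) (p : R) : Prop :=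
  exists (m : nat) (c g : 'I_m -> R), (forall j, S (g j)) /\ p = \sum_(j < m) c j * g j.

Definition binomL (k : comNzRingType) (a b n : nat) (f : {mpoly k[n]}) : Prop :=
  exists u v : 'X_{1..n},
    inL a b (fun i => (u i)%:Z - (v i)%:Z) /\ f = 'X_[u] - 'X_[v].

Definition phiS (k : comNzRingType) (a b n : nat) (p : {mpoly k[n]}) : {poly k} :=
  mmap (@polyC k) (fun i : 'I_n => 'X^(aexp a b i)) p.

(* For any weights w, the kernel of the monomial map x_i |-> t^(w i) is generated
   by the binomials x^u - x^v of equal weighted degree: fixing, for every degree d,
   a monomial rep d of p of degree d, p is a combination of the binomials
   x^m - x^(rep (deg m)) plus \sum_m p_m x^(rep (deg m)), and this last sum is the
   image of phi p = 0 under t^d |-> x^(rep d).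
   It then remains to see that L is exactly the lattice of integer relations among
   a_1, ..., a_n.  Each generator is one, since a_(k+2) - (b+1) a_(k+1) + b a_k = 0
   and (a+1) a_1 + b a_(n-1) = (b+1) a_n.  Conversely, subtracting multiples of the
   generators clears the coordinates of a relation from the top down to the first
   two, and a relation w_1 a_1 + w_2 a_2 = 0 is an integer multiple of
   (a_2, -a_1) because gcd(a_1, a_2) = gcd(r_b(n), a) = 1; telescoping the
   generators shows that (a_2, -a_1, 0, ..., 0) lies in L. *)

From mathcomp Require Import all_boot all_algebra.
From mathcomp Require Import mpoly.
From mathcomp Require Import zify ring.
Import GRing.Theory.
Local Open Scope ring_scope.
Set Implicit Arguments. Unset Strict Implicit.

Lemma in_ideal_gen_sub (R : comNzRingType) (S T : R -> Prop) p :
  (forall g, S g -> T g) -> in_ideal_gen S p -> in_ideal_gen T p.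
Proof. by move=> ST [m [c [g [Sg ->]]]]; exists m, c, g; split=> // j; apply: ST. Qed.

Lemma rmorph_in_ideal_gen_eq0 (R S : comNzRingType) (f : {rmorphism R -> S})
    (G : R -> Prop) p :
  (forall g, G g -> f g = 0) -> in_ideal_gen G p -> f p = 0.
Proof.
move=> fG [m [c [g [Gg ->]]]]; rewrite rmorph_sum big1 // => j _.
by rewrite rmorphM (fG _ (Gg j)) mulr0.
Qed.

Section WeightedDegree.
Variables (n : nat) (w : 'I_n -> nat).

Definition wdeg (m : 'X_{1..n}) : nat := (\sum_(i < n) m i * w i)%N.

Lemma wdeg_eqZ (u v : 'X_{1..n}) :
  wdeg u = wdeg v <-> \sum_(i < n) ((u i)%:Z - (v i)%:Z) * (w i)%:Z = 0.
Proof.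
have wdegZ m : (wdeg m)%:Z = \sum_(i < n) (m i)%:Z * (w i)%:Z.
  by rewrite /wdeg (big_morph Posz PoszD (erefl _)); apply: eq_bigr => i _; rewrite PoszM.
rewrite (eq_bigr (fun i => (u i)%:Z * (w i)%:Z - (v i)%:Z * (w i)%:Z)); last first.
  by move=> i _; rewrite mulrBl.
rewrite sumrB -!wdegZ; split=> [->|/eqP]; first exact: subrr.
by rewrite subr_eq0 eqz_nat => /eqP.
Qed.

Variable R : comNzRingType.

Local Notation phi := (mmap (@polyC R) (fun i => 'X^(w i))).

Definition equal_weight_binomial (f : {mpoly R[n]}) : Prop :=
  exists u v : 'X_{1..n}, wdeg u = wdeg v /\ f = 'X_[u] - 'X_[v].

Lemma mmap_weightX (m : 'X_{1..n}) : phi 'X_[m] = 'X^(wdeg m).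
Proof.
rewrite mmapX /mmap1 /wdeg.
rewrite (eq_bigr (fun i => 'X ^+ (w i * m i))); last by move=> i _; rewrite exprM.
by rewrite prodrXr; congr (_ ^+ _); apply: eq_bigr => i _; rewrite mulnC.
Qed.

Section Kernel.
Variable p : {mpoly R[n]}.

Definition rep (d : nat) : 'X_{1..n} :=
  nth 0%MM (msupp p) (find (fun m => wdeg m == d) (msupp p)).

Lemma wdeg_rep m : m \in msupp p -> wdeg (rep (wdeg m)) = wdeg m.
Proof.
move=> pm; apply/eqP; apply: (@nth_find _ 0%MM (fun m' => wdeg m' == wdeg m)).
by apply/hasP; exists m.
Qed.

Definition lift (N : nat) (f : {poly R}) : {mpoly R[n]} :=
  \sum_(d < N) f`_d *: 'X_[rep d].

Lemma liftD N : {morph lift N : f g / f + g}.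
Proof. by move=> f g; rewrite /lift -big_split; apply: eq_bigr => d _; rewrite coefD scalerDl. Qed.

Lemma lift0 N : lift N 0 = 0.
Proof. by rewrite /lift big1 // => d _; rewrite coef0 scale0r. Qed.

Lemma liftZX N c e : (e < N)%N -> lift N (c *: 'X^e) = c *: 'X_[rep e].
Proof.
move=> lt_eN; rewrite /lift (bigD1 (Ordinal lt_eN)) //= coefZ coefXn eqxx mulr1.
rewrite big1 ?addr0 // => d ne_de; rewrite coefZ coefXn.
have /negbTE -> : nat_of_ord d != e by apply: contraNneq ne_de => de; apply/eqP/val_inj.
by rewrite mulr0 scale0r.
Qed.

Lemma mmap_weight_ker : phi p = 0 -> in_ideal_gen equal_weight_binomial p.
Proof.
move=> phip0; set s := msupp p.
set N := (\sum_(m <- s) (wdeg m).+1)%N.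
have wdeg_lt_N m : m \in s -> (wdeg m < N)%N.
  by move=> sm; rewrite /N (bigD1_seq m) ?msupp_uniq //=; lia.
have phipE : phi p = \sum_(m <- s) p@_m *: 'X^(wdeg m).
  rewrite {1}(mpolyE p) raddf_sum /=; apply: eq_bigr => m _.
  by rewrite mmapZ mmap_weightX mul_polyC.
have rep_part0 : \sum_(m <- s) p@_m *: 'X_[rep (wdeg m)] = 0.
  transitivity (lift N (phi p)); last by rewrite phip0 lift0.
  rewrite phipE (big_morph (lift N) (liftD N) (lift0 N)).
  by rewrite !big_seq; apply: eq_bigr => m sm; rewrite liftZX ?wdeg_lt_N.
have pE : p = \sum_(m <- s) (p@_m)%:MP * ('X_[m] - 'X_[rep (wdeg m)]).
  rewrite (eq_bigr (fun m => p@_m *: 'X_[m] - p@_m *: 'X_[rep (wdeg m)])); last first.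
    by move=> m _; rewrite mul_mpolyC scalerBr.
  by rewrite sumrB rep_part0 subr0 -mpolyE.
exists (size s), (fun j => (p@_(nth 0%MM s j))%:MP),
  (fun j => 'X_[nth 0%MM s j] - 'X_[rep (wdeg (nth 0%MM s j))]).
split; last by rewrite {1}pE (big_nth 0%MM) big_mkord.
move=> j; exists (nth 0%MM s j), (rep (wdeg (nth 0%MM s j))).
by rewrite wdeg_rep ?mem_nth.
Qed.

End Kernel.

Lemma mmap_weight_kerE (p : {mpoly R[n]}) :
  phi p = 0 <-> in_ideal_gen equal_weight_binomial p.
Proof.
split; first exact: mmap_weight_ker.
apply: rmorph_in_ideal_gen_eq0 => _ [u [v [uv ->]]].
by rewrite rmorphB /= !mmap_weightX uv subrr.
Qed.

End WeightedDegree.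

Lemma rb0 b : rb b 0 = 0%N.
Proof. by rewrite /rb big_ord0. Qed.

Lemma rbS b l : rb b l.+1 = (1 + b * rb b l)%N.
Proof.
rewrite /rb big_ord_recl expn0 big_distrr /=; congr (_ + _)%N.
by apply: eq_bigr => i _; rewrite expnS.
Qed.

Lemma sum_ind (x : nat -> int) j n :
  \sum_(0 <= i < n) ind i.+1 j * x i = if (0 < j <= n)%N then x j.-1 else 0.
Proof.
elim: n => [|n IH]; first by rewrite big_nil; case: j => [|[]].
rewrite big_nat_recr //= IH /ind.
case: (eqVneq n.+1 j) => [<-|ne_j] /=; first by rewrite ltnn ltnSn add0r mul1r.
rewrite mul0r addr0; case: j ne_j {IH} => [|j] ne_j //=.
by rewrite ltnS (leq_eqVlt j n); case: (eqVneq j n) => [e|]; [rewrite e eqxx in ne_j|].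
Qed.

Section Lattice.
Variables a b n : nat.
Hypothesis n_gt1 : (1 < n)%N.

(* 0-based, like [aexp]: [aexpz i] is the paper's a_(i+1), the weight of [W i]. *)
Definition aexpz (i : nat) : int := (rb b n + a * rb b i)%N.

Definition adot (W : nat -> int) : int := \sum_(0 <= i < n) W i * aexpz i.

Lemma adot_genL k : (0 < k)%N -> (k.+2 <= n)%N -> adot (fun i => genL b k i.+1) = 0.
Proof.
move=> k_gt0 k_lt_n; rewrite /adot.
rewrite (eq_bigr (fun i => b%:Z * (ind i.+1 k * aexpz i)
  - (b.+1)%:Z * (ind i.+1 k.+1 * aexpz i) + ind i.+1 k.+2 * aexpz i)); last first.
  by move=> i _; rewrite /genL; ring.
rewrite big_split sumrB /= -!mulr_sumr !sum_ind.
have -> : (0 < k <= n)%N by lia.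
have -> : (0 < k.+1 <= n)%N by lia.
have -> : (0 < k.+2 <= n)%N by lia.
case: k k_gt0 k_lt_n => [//|k] _ _ /=.
rewrite /aexpz !rbS !PoszD !PoszM; ring.
Qed.

Lemma adot_genLast : adot (fun i => genLast a b n i.+1) = 0.
Proof.
rewrite /adot.
rewrite (eq_bigr (fun i => (a.+1)%:Z * (ind i.+1 1 * aexpz i)
  + b%:Z * (ind i.+1 n.-1 * aexpz i) - (b.+1)%:Z * (ind i.+1 n * aexpz i))); last first.
  by move=> i _; rewrite /genLast; ring.
rewrite !big_split /= sumrN -!mulr_sumr !sum_ind.
have -> : (0 < 1 <= n)%N by lia.
have -> : (0 < n.-1 <= n)%N by lia.
have -> : (0 < n <= n)%N by lia.
have -> : n.-1 = n.-2.+1 by lia.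
have n_eq : n = n.-2.+2 by lia.
rewrite /aexpz /= [in rb b n]n_eq !rbS rb0 !PoszD !PoszM; ring.
Qed.

Lemma eq_inL (w1 w2 : 'I_n -> int) : w1 =1 w2 -> inL a b w1 -> inL a b w2.
Proof. by move=> e [c hc]; exists c => i; rewrite -e hc. Qed.

Lemma inLD (w1 w2 : 'I_n -> int) :
  inL a b w1 -> inL a b w2 -> inL a b (fun i => w1 i + w2 i).
Proof.
move=> [c1 h1] [c2 h2]; exists (fun k => c1 k + c2 k) => i.
rewrite h1 h2 mulrDl (eq_bigr _ (fun k _ => mulrDl _ _ _)) big_split /=; ring.
Qed.

Lemma inLZ t (w : 'I_n -> int) : inL a b w -> inL a b (fun i => t * w i).
Proof.
move=> [c h]; exists (fun k => t * c k) => i.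
rewrite h mulrDr mulr_sumr mulrA; congr (_ + _).
by apply: eq_bigr => k _; rewrite mulrA.
Qed.

Lemma inL_genL k : (0 < k)%N -> (k.+2 <= n)%N -> inL a b (fun i : 'I_n => genL b k i.+1).
Proof.
move=> k_gt0 k_lt_n; exists (fun k' => if k' == k then 1 else 0) => i.
have -> : (n.-1 == k) = false by apply/negbTE; lia.
rewrite mul0r addr0 (big_cat_nat (n := k)); try lia.
rewrite (big_ltn (m := k)); last by lia.
rewrite eqxx mul1r big_nat_cond big1; last first.
  by move=> j /andP[/andP[_ hj] _]; rewrite (ltn_eqF hj) mul0r.
rewrite big_nat_cond big1; last first.
  by move=> j /andP[/andP[hj _] _]; rewrite (gtn_eqF hj) mul0r.
by rewrite -[RHS]/(0 + (genL b k i.+1 + 0)) add0r addr0.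
Qed.

Lemma inL_genLast : inL a b (fun i : 'I_n => genLast a b n i.+1).
Proof.
exists (fun k => if k == n.-1 then 1 else 0) => i.
rewrite eqxx mul1r big_nat_cond big1 ?add0r // => j /andP[/andP[_ hj] _].
by rewrite (ltn_eqF hj) mul0r.
Qed.

Lemma inL_weight_sum0 (w : 'I_n -> int) : inL a b w -> \sum_(i < n) w i * aexpz i = 0.
Proof.
move=> [c wE].
rewrite (eq_bigr (fun i : 'I_n => \sum_(1 <= k < n.-1) c k * (genL b k i.+1 * aexpz i)
   + c n.-1 * (genLast a b n i.+1 * aexpz i))); last first.
  move=> i _; rewrite wE mulrDl mulr_suml mulrA; congr (_ + _).
  by apply: eq_bigr => k _; rewrite mulrA.
rewrite big_split /= exchange_big /= -mulr_sumr.
rewrite -(big_mkord xpredT (fun i => genLast a b n i.+1 * aexpz i)).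
rewrite [X in c _ * X]adot_genLast mulr0 addr0.
rewrite big_nat_cond big1 // => k /andP[/andP[k_gt0 k_lt] _].
rewrite -mulr_sumr -(big_mkord xpredT (fun i => genL b k i.+1 * aexpz i)).
by rewrite [X in c _ * X]adot_genL ?mulr0 //; lia.
Qed.

(* The combination genLast + \sum_(m <= k < n-1) r_b(n-k) genL_k, telescoped. *)
Definition tail_relation (m j : nat) : int :=
  (a.+1)%:Z * ind j 1 + b%:Z * (rb b (n - m))%:Z * ind j m
  - (rb b (n - m).+1)%:Z * ind j m.+1.

Lemma inL_tail_relation m : (0 < m < n)%N ->
  inL a b (fun i : 'I_n => tail_relation m i.+1).
Proof.
case/andP=> m_gt0 m_lt_n; have [s] : exists s, (m + s = n.-1)%N by exists (n.-1 - m)%N; lia.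
elim: s m m_gt0 {m_lt_n} => [|s IH] m m_gt0 e.
  apply: eq_inL inL_genLast => i; rewrite /tail_relation.
  have -> : m = n.-1 by lia.
  have -> : (n - n.-1 = 1)%N by lia.
  have -> : n.-1.+1 = n by lia.
  rewrite /genLast !rbS rb0 /=; ring.
have := inLD (IH m.+1 isT ltac:(lia)) (inLZ (rb b (n - m))%:Z (inL_genL m_gt0 ltac:(lia))).
apply: eq_inL => i; rewrite /tail_relation.
have -> : (n - m = s.+2)%N by lia.
have -> : (n - m.+1 = s.+1)%N by lia.
rewrite /genL !rbS !PoszD !PoszM; ring.
Qed.

Lemma inL_first_relation :
  inL a b (fun i : 'I_n => aexpz 1 * ind i.+1 1 - aexpz 0 * ind i.+1 2).
Proof.
apply: eq_inL (inL_tail_relation (m := 1) ltac:(lia)) => i.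
have n_eq : n = (n - 1).+1 by lia.
rewrite /tail_relation /aexpz [in rb b n]n_eq !rbS !rb0 !PoszD !PoszM; ring.
Qed.

Hypothesis coprime_rb : coprime (rb b n) a.

Lemma inL_adot0_first_two (W : nat -> int) :
  (forall i, (2 <= i < n)%N -> W i = 0) -> adot W = 0 -> inL a b (fun i : 'I_n => W i).
Proof.
move=> W_eq0 W_rel.
have rel2 : W 0%N * aexpz 0 + W 1%N * aexpz 1 = 0.
  rewrite -W_rel /adot big_ltn; last by lia.
  rewrite big_ltn; last by lia.
  rewrite big_nat_cond big1 ?addr0 // => i /andP[/andP[i_ge2 i_lt_n] _].
  by rewrite W_eq0 ?mul0r //; lia.
have aexpz1 : aexpz 1 = aexpz 0 + a%:Z by rewrite /aexpz rbS rb0; lia.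
set R := aexpz 0 in rel2 aexpz1 *.
have : (R %| a%:Z * W 1%N)%Z.
  apply/dvdzP; exists (- (W 0%N + W 1%N)).
  have -> : a%:Z * W 1%N = W 0%N * R + W 1%N * aexpz 1 - (W 0%N + W 1%N) * R.
    by rewrite aexpz1; ring.
  by rewrite rel2 add0r mulNr.
rewrite Gauss_dvdzr; last by rewrite /coprimez /gcdz /R /aexpz rb0 muln0 addn0 /=.
case/dvdzP=> q W1E.
have R_neq0 : R != 0 by rewrite /R /aexpz eqz_nat -lt0n; case: (n) n_gt1 => // m _; rewrite rbS.
have W0E : W 0%N = - q * aexpz 1.
  apply: (mulIf R_neq0); apply/eqP; rewrite -subr_eq0 -[X in _ == X]rel2 W1E aexpz1.
  by apply/eqP; ring.
apply: eq_inL (inLZ (- q) inL_first_relation) => -[[|[|i]] i_lt_n].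
- by rewrite W0E /ind /=; ring.
- by rewrite W1E /ind /=; ring.
- by rewrite W_eq0 /ind /=; [ring | lia].
Qed.

Lemma inL_adot0_support t (W : nat -> int) : (t.+2 <= n)%N ->
  (forall i, (t.+2 <= i < n)%N -> W i = 0) -> adot W = 0 -> inL a b (fun i : 'I_n => W i).
Proof.
elim: t W => [|t IH] W t_lt_n W_eq0 W_rel; first exact: inL_adot0_first_two.
pose W' i := W i - W t.+2 * genL b t.+1 i.+1.
have W'_eq0 i : (t.+2 <= i < n)%N -> W' i = 0.
  move=> /andP[i_ge i_lt]; rewrite /W' /genL /ind.
  have -> : (i.+1 == t.+1) = false by apply/eqP; lia.
  have -> : (i.+1 == t.+2) = false by apply/eqP; lia.
  case: (eqVneq i t.+2) => [-> | ne_i]; first by rewrite eqxx; ring.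
  have -> : (i.+1 == t.+3) = false by apply/eqP; lia.
  by rewrite W_eq0; [ring | lia].
have W'_rel : adot W' = 0.
  rewrite /adot (eq_bigr (fun i => W i * aexpz i - W t.+2 * (genL b t.+1 i.+1 * aexpz i))).
    rewrite sumrB -mulr_sumr -/(adot W) -/(adot (fun i => genL b t.+1 i.+1)).
    by rewrite W_rel adot_genL ?mulr0 ?subr0 //; lia.
  by move=> i _; rewrite /W'; ring.
apply: eq_inL (inLD (IH W' ltac:(lia) W'_eq0 W'_rel)
  (inLZ (W t.+2) (inL_genL (k := t.+1) isT t_lt_n))) => i.
by rewrite /W'; ring.
Qed.

Lemma inL_adot0 (W : nat -> int) : adot W = 0 -> inL a b (fun i : 'I_n => W i).
Proof. by apply: (inL_adot0_support (t := n - 2)) => [|i]; lia. Qed.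

Lemma inL_iff_weight_sum0 (w : 'I_n -> int) :
  inL a b w <-> \sum_(i < n) w i * (aexp a b i)%:Z = 0.
Proof.
split; first exact: inL_weight_sum0.
pose W j := if insub j is Some i then w i else 0.
have WE (i : 'I_n) : W i = w i by rewrite /W valK.
move=> w_rel; apply: (eq_inL WE); apply: inL_adot0.
by rewrite /adot big_mkord -[RHS]w_rel; apply: eq_bigr => i _; rewrite WE.
Qed.

Lemma inL_iff_wdeg (u v : 'X_{1..n}) :
  inL a b (fun i => (u i)%:Z - (v i)%:Z) <-> wdeg (@aexp a b n) u = wdeg (@aexp a b n) v.
Proof. exact: iff_trans (inL_iff_weight_sum0 _) (iff_sym (wdeg_eqZ _ u v)). Qed.

End Lattice.

Theorem corollary11 (k : fieldType) (a b n : nat) :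
  (0 < a)%N -> (1 < b)%N -> (1 < n)%N -> coprime (rb b n) a ->
  forall p : {mpoly k[n]},
    phiS a b p = 0 <-> in_ideal_gen (binomL a b (n := n)) p.
Proof.
move=> _ _ n_gt1 coprime_rb p.
have binomLE f : binomL a b f <-> equal_weight_binomial (@aexp a b n) f.
  by split=> -[u [v [uv ->]]]; exists u, v; split=> //; apply/(inL_iff_wdeg n_gt1 coprime_rb).
rewrite /phiS mmap_weight_kerE.
by split; apply: in_ideal_gen_sub => f /binomLE.
Qed.
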